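(* Let $(Y,d)$ be a length space and $y_0\in Y$. Equip $Y\times\mathbb{R}$ with the product metric $\big((y,t),(y',t')\big)\mapsto\sqrt{d(y,y')^2+|t-t'|^2}$, and let $B_{(y_0,0)}(s)$ denote the open ball of radius $s$ about $(y_0,0)$ in this metric. If $L>0$ and $0<r<\min\{\tfrac12\mathrm{Diam}(Y,d),\,L\}$, then $B_{(y_0,0)}(L)-B_{(y_0,0)}(r)$ is path connected.
   Context: A metric space $(Y,d)$ is called a length space if for all $x,y\in Y$ there is a path $\gamma_0$ from $x$ to $y$ whose length (the supremum over partitions $a=t_0<\dots<t_n=b$ of $\sum_i d(\gamma(t_i),\gamma(t_{i+1}))$) equals $d(x,y)<\infty$. $\mathrm{Diam}(Y,d)$ may be $+\infty$. *)

From Stdlib Require Import Reals.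
From Coquelicot Require Import Coquelicot.
Open Scope R_scope.

Definition is_metric {Y : Type} (d : Y -> Y -> R) : Prop :=
  (forall x y, 0 <= d x y) /\
  (forall x y, d x y = 0 <-> x = y) /\
  (forall x y, d x y = d y x) /\
  (forall x y z, d x z <= d x y + d y z).

Definition continuous_on_interval {Y : Type} (d : Y -> Y -> R)
    (a b : R) (g : R -> Y) : Prop :=
  forall t, a <= t <= b -> forall eps, 0 < eps ->
    exists delta, 0 < delta /\
      forall s, a <= s <= b -> Rabs (s - t) < delta -> d (g s) (g t) < eps.

Definition is_path {Y : Type} (d : Y -> Y -> R) (a b : R) (g : R -> Y)
    (x y : Y) : Prop :=
  a <= b /\ continuous_on_interval d a b g /\ g a = x /\ g b = y.

Definition is_partition (a b : R) (t : nat -> R) (n : nat) : Prop :=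
  t 0%nat = a /\ t n = b /\ (forall i, (i < n)%nat -> t i < t (S i)).

Fixpoint partition_sum {Y : Type} (d : Y -> Y -> R) (g : R -> Y)
    (t : nat -> R) (n : nat) : R :=
  match n with
  | O => 0
  | S k => partition_sum d g t k + d (g (t k)) (g (t (S k)))
  end.

Definition path_length {Y : Type} (d : Y -> Y -> R) (a b : R) (g : R -> Y)
  : Rbar :=
  Lub_Rbar (fun s => exists (t : nat -> R) (n : nat),
                is_partition a b t n /\ s = partition_sum d g t n).

Definition is_length_space {Y : Type} (d : Y -> Y -> R) : Prop :=
  is_metric d /\
  forall x y : Y, exists (a b : R) (g : R -> Y),
    is_path d a b g x y /\ path_length d a b g = Finite (d x y).

Definition Diam {Y : Type} (d : Y -> Y -> R) : Rbar :=
  Lub_Rbar (fun s => exists x y : Y, s = d x y).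

Definition YR_dist {Y : Type} (d : Y -> Y -> R) (p q : Y * R) : R :=
  sqrt (d (fst p) (fst q) ^ 2 + Rabs (snd p - snd q) ^ 2).

Definition YR_ball {Y : Type} (d : Y -> Y -> R) (c : Y * R) (s : R)
  : Y * R -> Prop :=
  fun p => YR_dist d c p < s.

Definition path_connected {Y : Type} (d : Y -> Y -> R) (A : Y * R -> Prop)
  : Prop :=
  forall p q, A p -> A q ->
    exists g : R -> Y * R,
      is_path (YR_dist d) 0 1 g p q /\
      (forall t, 0 <= t <= 1 -> A (g t)).

From Stdlib Require Import Reals Lra Lia Classical.
From Coquelicot Require Import Coquelicot.
Open Scope R_scope.

(* Write rho(y, t) = sqrt (d(y0, y)^2 + t^2) for the distance to (y0, 0).  A point (y, t) with
   t >= 0 slides inside the sphere rho = rho(y, t) to the "north pole" (y0, rho): follow a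
   geodesic g from y to y0 and lift it to (g s, sqrt (rho^2 - d(y0, g s)^2)), which is defined
   because d(y0, .) only decreases along a geodesic ending at y0.  A vertical segment then
   reaches (y0, r).  The reflection t |-> -t handles t <= 0 with the south pole (y0, -r), and
   the two poles are joined through (y1, 0) for a point y1 with d(y0, y1) = r, which exists by
   the intermediate value theorem along a geodesic from y0 to a point at distance > r (the
   diameter bound provides one). *)

Section ContinuousOnInterval.
Context {X : Type} (dX : X -> X -> R).

Lemma continuous_on_interval_ext a b g h :
  continuous_on_interval dX a b g -> (forall s, a <= s <= b -> g s = h s) ->
  continuous_on_interval dX a b h.
Proof.
  intros Hg E t Ht eps He. destruct (Hg t Ht eps He) as [delta [Hdelta Hclose]].
  exists delta; split; auto. intros s Hs Hst. rewrite <- !E by auto. auto.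
Qed.

Lemma continuous_on_interval_comp a b c e (phi : R -> R) (g : R -> X) :
  continuous_on_interval Rdist a b phi ->
  (forall t, a <= t <= b -> c <= phi t <= e) ->
  continuous_on_interval dX c e g ->
  continuous_on_interval dX a b (fun t => g (phi t)).
Proof.
  intros Hphi Hrange Hg t Ht eps He.
  destruct (Hg (phi t) (Hrange t Ht) eps He) as [d1 [Hd1 Hg_close]].
  destruct (Hphi t Ht d1 Hd1) as [d2 [Hd2 Hphi_close]].
  exists d2; split; auto. intros s Hs Hst.
  apply Hg_close; [apply Hrange; auto|apply Hphi_close; auto].
Qed.

Lemma continuous_on_interval_const a b (x : X) :
  dX x x = 0 -> continuous_on_interval dX a b (fun _ => x).
Proof. intros Hx t Ht eps He. exists 1; split; [lra|]. intros; rewrite Hx; lra. Qed.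

Lemma continuous_on_interval_glue a b c g :
  continuous_on_interval dX a b g -> continuous_on_interval dX b c g ->
  continuous_on_interval dX a c g.
Proof.
  intros H1 H2 t Ht eps He.
  destruct (Rlt_le_dec t b) as [Hlt|Hge].
  - destruct (H1 t ltac:(lra) eps He) as [d1 [Hd1 Hclose]].
    exists (Rmin d1 (b - t)); split; [apply Rmin_pos; lra|].
    intros s Hs Hst. pose proof (Rmin_l d1 (b - t)); pose proof (Rmin_r d1 (b - t)).
    apply Rabs_def2 in Hst. apply Hclose; [lra|]. apply Rabs_def1; lra.
  - destruct (Rle_lt_or_eq_dec b t Hge) as [Hgt|<-].
    + destruct (H2 t ltac:(lra) eps He) as [d2 [Hd2 Hclose]].
      exists (Rmin d2 (t - b)); split; [apply Rmin_pos; lra|].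
      intros s Hs Hst. pose proof (Rmin_l d2 (t - b)); pose proof (Rmin_r d2 (t - b)).
      apply Rabs_def2 in Hst. apply Hclose; [lra|]. apply Rabs_def1; lra.
    + destruct (H1 b ltac:(lra) eps He) as [d1 [Hd1 Hclose1]].
      destruct (H2 b ltac:(lra) eps He) as [d2 [Hd2 Hclose2]].
      exists (Rmin d1 d2); split; [apply Rmin_pos; lra|].
      intros s Hs Hst. pose proof (Rmin_l d1 d2); pose proof (Rmin_r d1 d2).
      destruct (Rle_dec s b); [apply Hclose1|apply Hclose2]; lra.
Qed.

End ContinuousOnInterval.

Lemma continuous_on_interval_affine a b u v :
  continuous_on_interval Rdist a b (fun s => u + s * v).
Proof.
  intros t Ht eps He. exists (eps / (Rabs v + 1)).
  pose proof (Rabs_pos v) as Hv. split; [apply Rdiv_lt_0_compat; lra|].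
  intros s Hs Hst. unfold Rdist.
  replace (u + s * v - (u + t * v)) with ((s - t) * v) by ring.
  rewrite Rabs_mult. pose proof (Rabs_pos (s - t)).
  apply Rle_lt_trans with (Rabs (s - t) * (Rabs v + 1)); [nra|].
  apply Rlt_le_trans with (eps / (Rabs v + 1) * (Rabs v + 1)).
  - apply Rmult_lt_compat_r; lra.
  - field_simplify; lra.
Qed.

Lemma continuous_on_interval_continuity_pt a b (f phi : R -> R) :
  (forall t, a <= t <= b -> continuity_pt f (phi t)) ->
  continuous_on_interval Rdist a b phi ->
  continuous_on_interval Rdist a b (fun t => f (phi t)).
Proof.
  intros Hf Hphi t Ht eps He.
  destruct (Hf t Ht eps He) as [d1 [Hd1 Hf_close]].
  destruct (Hphi t Ht d1 Hd1) as [d2 [Hd2 Hphi_close]].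
  exists d2; split; auto. intros s Hs Hst.
  destruct (Req_dec (phi s) (phi t)) as [->|Hne].
  - unfold Rdist, Rminus; rewrite Rplus_opp_r, Rabs_R0; lra.
  - apply (Hf_close (phi s)). split; [split; [exact I|auto]|apply Hphi_close; auto].
Qed.

Lemma continuous_on_interval_dist_l {Y} (d : Y -> Y -> R) a b y0 g :
  is_metric d -> continuous_on_interval d a b g ->
  continuous_on_interval Rdist a b (fun s => d y0 (g s)).
Proof.
  intros [_ [_ [Hsym Htri]]] Hg t Ht eps He.
  destruct (Hg t Ht eps He) as [delta [Hdelta Hclose]].
  exists delta; split; auto. intros s Hs Hst. specialize (Hclose s Hs Hst). unfold Rdist.
  pose proof (Htri y0 (g s) (g t)). pose proof (Htri y0 (g t) (g s)).
  rewrite (Hsym (g t) (g s)) in *. apply Rabs_def1; lra.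
Qed.

Lemma sqrt_sum_sqr_le x y : 0 <= x -> 0 <= y -> sqrt (x ^ 2 + y ^ 2) <= x + y.
Proof. intros. rewrite <- (sqrt_pow2 (x + y)) by lra. apply sqrt_le_1_alt. nra. Qed.

Lemma continuous_on_interval_pair {Y} (d : Y -> Y -> R) a b g1 g2 :
  is_metric d -> continuous_on_interval d a b g1 -> continuous_on_interval Rdist a b g2 ->
  continuous_on_interval (YR_dist d) a b (fun s => (g1 s, g2 s)).
Proof.
  intros [Hpos _] H1 H2 t Ht eps He.
  destruct (H1 t Ht (eps / 2)) as [d1 [Hd1 Hclose1]]; [lra|].
  destruct (H2 t Ht (eps / 2)) as [d2 [Hd2 Hclose2]]; [lra|].
  exists (Rmin d1 d2); split; [apply Rmin_pos; auto|].
  intros s Hs Hst. pose proof (Rmin_l d1 d2); pose proof (Rmin_r d1 d2).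
  specialize (Hclose1 s Hs ltac:(lra)). specialize (Hclose2 s Hs ltac:(lra)).
  unfold YR_dist, Rdist in *; cbn [fst snd].
  eapply Rle_lt_trans; [apply sqrt_sum_sqr_le; [apply Hpos|apply Rabs_pos]|lra].
Qed.

Section Joinable.
Context {X : Type} (dX : X -> X -> R) (A : X -> Prop).

Definition joinable (p q : X) : Prop :=
  exists g : R -> X, is_path dX 0 1 g p q /\ (forall t, 0 <= t <= 1 -> A (g t)).

Lemma is_path_joinable a b g p q : is_path dX a b g p q ->
  (forall t, a <= t <= b -> A (g t)) -> joinable p q.
Proof.
  intros [Hab [Hg [Ha Hb]]] HA.
  exists (fun s => g (a + s * (b - a))). split; [split; [lra|split]|].
  - apply continuous_on_interval_comp with a b;
      [apply continuous_on_interval_affine|intros; nra|exact Hg].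
  - split; [rewrite Rmult_0_l, Rplus_0_r; auto|].
    replace (a + 1 * (b - a)) with b by ring; auto.
  - intros t Ht. apply HA. nra.
Qed.

Lemma joinable_sym p q : joinable p q -> joinable q p.
Proof.
  intros [g [[_ [Hg [Ha Hb]]] HA]].
  apply (is_path_joinable 0 1 (fun s => g (1 + s * -1))).
  - split; [lra|split; [|split]].
    + apply continuous_on_interval_comp with 0 1;
        [apply continuous_on_interval_affine|intros; lra|exact Hg].
    + replace (1 + 0 * -1) with 1 by ring; auto.
    + replace (1 + 1 * -1) with 0 by ring; auto.
  - intros t Ht. apply HA; lra.
Qed.

Lemma joinable_trans p q r : joinable p q -> joinable q r -> joinable p r.
Proof.
  intros [g1 [[_ [Hg1 [Ha1 Hb1]]] HA1]] [g2 [[_ [Hg2 [Ha2 Hb2]]] HA2]].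
  set (g := fun s => if Rle_dec s 1 then g1 s else g2 (s - 1)).
  apply (is_path_joinable 0 2 g).
  - split; [lra|split; [|split]].
    + apply continuous_on_interval_glue with 1.
      * apply continuous_on_interval_ext with g1; [exact Hg1|].
        intros s Hs. unfold g. destruct (Rle_dec s 1); [auto|lra].
      * apply continuous_on_interval_ext with (fun s => g2 (-1 + s * 1)).
        -- apply continuous_on_interval_comp with 0 1;
             [apply continuous_on_interval_affine|intros; lra|exact Hg2].
        -- intros s Hs. unfold g. destruct (Rle_dec s 1).
           ++ replace s with 1 by lra. replace (-1 + 1 * 1) with 0 by ring. congruence.
           ++ f_equal; ring.
    + unfold g. destruct (Rle_dec 0 1); [auto|lra].
    + unfold g. destruct (Rle_dec 2 1); [lra|]. replace (2 - 1) with 1 by ring. auto.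
  - intros t Ht. unfold g. destruct (Rle_dec t 1); [apply HA1|apply HA2]; lra.
Qed.

Lemma joinable_map (f : X -> X) p q :
  (forall x y, dX (f x) (f y) <= dX x y) -> (forall x, A x -> A (f x)) ->
  joinable p q -> joinable (f p) (f q).
Proof.
  intros Hf HfA [g [[Hab [Hg [Ha Hb]]] HA]]. exists (fun s => f (g s)).
  split; [split; [lra|split; [|split]]|].
  - intros t Ht eps He. destruct (Hg t Ht eps He) as [delta [Hdelta Hclose]].
    exists delta; split; auto. intros s Hs Hst. eapply Rle_lt_trans; [apply Hf|auto].
  - rewrite Ha; auto.
  - rewrite Hb; auto.
  - intros t Ht. apply HfA, HA; auto.
Qed.

End Joinable.

Lemma path_length_le_dist_through {Y} (d : Y -> Y -> R) a b g x y :
  is_metric d -> is_path d a b g x y -> path_length d a b g = Finite (d x y) ->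
  forall s, a <= s <= b -> d x (g s) + d (g s) y <= d x y.
Proof.
  intros [_ [Hsep _]] [Hab [_ [Ha Hb]]] Hlen s Hs.
  destruct (Req_dec s a) as [->|Hsa]; [rewrite Ha, (proj2 (Hsep x x) eq_refl); lra|].
  destruct (Req_dec s b) as [->|Hsb]; [rewrite Hb, (proj2 (Hsep y y) eq_refl); lra|].
  destruct (Lub_Rbar_correct (fun l => exists (t : nat -> R) (n : nat),
                is_partition a b t n /\ l = partition_sum d g t n)) as [Hub _].
  unfold path_length in Hlen. rewrite Hlen in Hub.
  set (t := fun i : nat => match i with O => a | 1%nat => s | _ => b end).
  assert (H : Rbar_le (partition_sum d g t 2) (d x y)).
  { apply Hub. exists t, 2%nat. split; [|reflexivity]. split; [auto|split; [auto|]].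
    intros i Hi. destruct i as [|[|i]]; simpl; lra || lia. }
  simpl in H. rewrite Ha, Hb in H. lra.
Qed.

Lemma continuous_on_interval_IVT a b f v : a <= b -> continuous_on_interval Rdist a b f ->
  f a < v < f b -> exists s, a <= s <= b /\ f s = v.
Proof.
  intros Hab Hf [Ha Hb].
  assert (Hlt : a < b) by (destruct (Req_dec a b) as [->|]; lra).
  (* The Stdlib IVT wants two-sided continuity at the endpoints, so extend f by constants. *)
  set (clamp := fun x => Rmax a (Rmin b x)).
  assert (Hclamp_in : forall x, a <= clamp x <= b)
    by (intros; unfold clamp, Rmax, Rmin; repeat destruct Rle_dec; lra).
  assert (Hclamp_id : forall x, a <= x <= b -> clamp x = x)
    by (intros; unfold clamp, Rmax, Rmin; repeat destruct Rle_dec; lra).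
  assert (Hclamp_lip : forall x y, Rabs (clamp x - clamp y) <= Rabs (x - y))
    by (intros; unfold clamp, Rmax, Rmin, Rabs; repeat destruct Rle_dec;
        repeat destruct Rcase_abs; lra).
  set (F := fun x => f (clamp x) - v).
  assert (HF : forall x, a <= x <= b -> continuity_pt F x).
  { intros x _ eps He. destruct (Hf _ (Hclamp_in x) eps He) as [delta [Hdelta Hclose]].
    exists delta; split; auto. intros x' [_ Hx']. simpl in *. unfold Rdist, F in *.
    replace (f (clamp x') - v - (f (clamp x) - v)) with (f (clamp x') - f (clamp x)) by ring.
    apply Hclose; [apply Hclamp_in|]. eapply Rle_lt_trans; [apply Hclamp_lip|auto]. }
  destruct (Ranalysis5.IVT_interv F a b HF Hlt) as [s [Hs Fs]].
  - unfold F. rewrite Hclamp_id; lra.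
  - unfold F. rewrite Hclamp_id; lra.
  - exists s; split; auto. unfold F in Fs. rewrite Hclamp_id in Fs; lra.
Qed.

Lemma Diam_gt_far_point {Y} (d : Y -> Y -> R) (y0 : Y) r : is_metric d ->
  Rbar_lt (Finite r) (Rbar_mult (/ 2) (Diam d)) -> exists y, r < d y0 y.
Proof.
  intros [_ [_ [Hsym Htri]]] Hdiam. apply NNPP; intros Hnear.
  assert (Hbound : Rbar_le (Diam d) (Finite (2 * r))).
  { apply (proj2 (Lub_Rbar_correct _)). intros l [x [y ->]]. simpl.
    pose proof (Htri x y0 y). rewrite (Hsym x y0) in *.
    destruct (Rle_dec (d y0 x) r); [|exfalso; apply Hnear; exists x; lra].
    destruct (Rle_dec (d y0 y) r); [lra|exfalso; apply Hnear; exists y; lra]. }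
  destruct (Diam d) as [D| |]; simpl in *.
  - lra.
  - exact Hbound.
  - revert Hdiam. unfold Rbar_mult, Rbar_mult'.
    destruct (Rle_dec 0 (/ 2)) as [Hhalf|]; [|simpl; lra].
    destruct (Rle_lt_or_eq_dec 0 (/ 2) Hhalf); simpl; lra.
Qed.

Lemma length_space_sphere_nonempty {Y} (d : Y -> Y -> R) (y0 y2 : Y) r :
  is_length_space d -> 0 < r < d y0 y2 -> exists y1, d y0 y1 = r.
Proof.
  intros [Hm Hgeo] [Hr Hy2]. pose proof Hm as [_ [Hsep _]].
  destruct (Hgeo y0 y2) as [a [b [g [Hpath _]]]].
  pose proof Hpath as [Hab [Hg [Ha Hb]]].
  destruct (continuous_on_interval_IVT a b (fun s => d y0 (g s)) r Hab
              (continuous_on_interval_dist_l d a b y0 g Hm Hg)) as [s [_ Hs]].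
  - rewrite Ha, Hb, (proj2 (Hsep y0 y0) eq_refl); lra.
  - exists (g s); exact Hs.
Qed.

Definition annulus {Y} (d : Y -> Y -> R) (c : Y * R) (r L : R) (p : Y * R) : Prop :=
  YR_ball d c L p /\ ~ YR_ball d c r p.

Definition reflect {Y} (p : Y * R) : Y * R := (fst p, - snd p).

Lemma YR_dist_reflect {Y} (d : Y -> Y -> R) p q :
  YR_dist d (reflect p) (reflect q) = YR_dist d p q.
Proof.
  unfold YR_dist, reflect; cbn [fst snd].
  replace (- snd p - - snd q) with (- (snd p - snd q)) by ring. rewrite Rabs_Ropp; auto.
Qed.

Section Annulus.
Context {Y : Type} (d : Y -> Y -> R) (Hm : is_metric d) (y0 : Y) (r L : R).

Let A := annulus d (y0, 0) r L.

Lemma YR_dist_center y t : YR_dist d (y0, 0) (y, t) = sqrt (d y0 y ^ 2 + t ^ 2).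
Proof. unfold YR_dist; cbn [fst snd]. rewrite pow2_abs. f_equal; ring. Qed.

Lemma annulus_iff y t : A (y, t) <-> r <= sqrt (d y0 y ^ 2 + t ^ 2) < L.
Proof. unfold A, annulus, YR_ball. rewrite YR_dist_center. lra. Qed.

Lemma annulus_reflect p : A p -> A (reflect p).
Proof.
  destruct p as [y t]. unfold reflect; cbn [fst snd]. rewrite !annulus_iff.
  replace ((- t) ^ 2) with (t ^ 2) by ring. auto.
Qed.

Lemma sphere_path_to_axis y t rho a b g :
  0 <= t -> 0 <= rho -> d y0 y ^ 2 + t ^ 2 = rho ^ 2 ->
  is_path d a b g y y0 -> path_length d a b g = Finite (d y y0) ->
  exists h, is_path (YR_dist d) a b h (y, t) (y0, rho) /\
            forall s, a <= s <= b -> YR_dist d (y0, 0) (h s) = rho.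
Proof.
  intros Ht Hrho Hsum Hpath Hlen.
  pose proof Hm as [Hpos [Hsep [Hsym _]]].
  assert (Hdecr : forall s, a <= s <= b -> 0 <= d y0 (g s) <= d y0 y).
  { intros s Hs. pose proof (path_length_le_dist_through d a b g y y0 Hm Hpath Hlen s Hs).
    pose proof (Hpos y (g s)). rewrite (Hsym (g s) y0), (Hsym y y0) in *.
    split; [apply Hpos|lra]. }
  assert (Hrad : forall s, a <= s <= b -> d y0 (g s) ^ 2 <= rho ^ 2).
  { intros s Hs. specialize (Hdecr s Hs). pose proof (Hpos y0 y). nra. }
  exists (fun s => (g s, sqrt (rho ^ 2 - d y0 (g s) ^ 2))).
  destruct Hpath as [Hab [Hg [Ha Hb]]]. split; [split; [auto|split; [|split]]|].
  - apply continuous_on_interval_pair; [exact Hm|exact Hg|].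
    apply (continuous_on_interval_continuity_pt a b (fun x => sqrt (rho ^ 2 - x ^ 2))).
    + intros s Hs. specialize (Hrad s Hs).
      apply (continuity_pt_comp (fun x => rho ^ 2 - x ^ 2) sqrt).
      * apply derivable_continuous_pt; reg.
      * apply continuity_pt_sqrt. lra.
    + apply continuous_on_interval_dist_l; auto.
  - rewrite Ha. f_equal.
    replace (rho ^ 2 - d y0 y ^ 2) with (t ^ 2) by lra. apply sqrt_pow2; auto.
  - rewrite Hb, (proj2 (Hsep y0 y0) eq_refl). f_equal.
    replace (rho ^ 2 - 0 ^ 2) with (rho ^ 2) by ring. apply sqrt_pow2; auto.
  - intros s Hs. specialize (Hrad s Hs).
    rewrite YR_dist_center, pow2_sqrt by lra.
    replace (d y0 (g s) ^ 2 + (rho ^ 2 - d y0 (g s) ^ 2)) with (rho ^ 2) by ring.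
    apply sqrt_pow2; auto.
Qed.

Lemma annulus_axis_joinable u v : 0 <= r ->
  r <= u < L -> r <= v < L -> joinable (YR_dist d) A (y0, u) (y0, v).
Proof.
  intros Hr Hu Hv. pose proof Hm as [_ [Hsep _]].
  apply (is_path_joinable _ _ 0 1 (fun s => (y0, u + s * (v - u)))).
  - split; [lra|split; [|split]].
    + apply continuous_on_interval_pair; [exact Hm| |apply continuous_on_interval_affine].
      apply continuous_on_interval_const, Hsep; auto.
    + f_equal; ring.
    + f_equal; ring.
  - intros s Hs. apply annulus_iff. rewrite (proj2 (Hsep y0 y0) eq_refl).
    replace (0 ^ 2 + (u + s * (v - u)) ^ 2) with ((u + s * (v - u)) ^ 2) by ring.
    assert (Hseg : Rmin u v <= u + s * (v - u) <= Rmax u v).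
    { unfold Rmin, Rmax. destruct Rle_dec; split; nra. }
    pose proof (Rmin_glb_lt u v L). pose proof (Rmax_lub_lt u v L).
    pose proof (Rmin_glb u v r). rewrite sqrt_pow2; lra.
Qed.

Section LengthSpace.
Hypotheses (Hls : is_length_space d) (Hr : 0 <= r).

Lemma annulus_upper_joinable_north y t :
  A (y, t) -> 0 <= t -> joinable (YR_dist d) A (y, t) (y0, r).
Proof.
  intros HA Ht. pose proof (proj1 (annulus_iff y t) HA) as Hrho.
  set (rho := sqrt (d y0 y ^ 2 + t ^ 2)) in Hrho.
  assert (Hsum : d y0 y ^ 2 + t ^ 2 = rho ^ 2).
  { unfold rho. rewrite pow2_sqrt; auto. pose proof (proj1 Hm y0 y). nra. }
  destruct (proj2 Hls y y0) as [a [b [g [Hpath Hlen]]]].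
  destruct (sphere_path_to_axis y t rho a b g Ht ltac:(lra) Hsum Hpath Hlen)
    as [h [Hh Hh_sphere]].
  apply joinable_trans with (y0, rho).
  - apply (is_path_joinable _ _ _ _ _ _ _ Hh).
    intros s Hs. unfold A, annulus, YR_ball. rewrite (Hh_sphere s Hs). lra.
  - apply annulus_axis_joinable; lra.
Qed.

Lemma annulus_lower_joinable_south y t :
  A (y, t) -> t <= 0 -> joinable (YR_dist d) A (y, t) (y0, - r).
Proof.
  intros HA Ht.
  assert (Hup : joinable (YR_dist d) A (y, - t) (y0, r)).
  { apply annulus_upper_joinable_north; [apply (annulus_reflect (y, t) HA)|lra]. }
  pose proof (joinable_map _ A reflect _ _
                (fun p q => Req_le _ _ (YR_dist_reflect d p q)) annulus_reflect Hup) as Hdown.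
  unfold reflect in Hdown; cbn [fst snd] in Hdown. rewrite Ropp_involutive in Hdown.
  exact Hdown.
Qed.

Lemma annulus_joinable_north (y1 : Y) p :
  r < L -> d y0 y1 = r -> A p -> joinable (YR_dist d) A p (y0, r).
Proof.
  intros HrL Hy1 HA. destruct p as [y t].
  destruct (Rle_dec 0 t) as [Ht|Ht]; [apply annulus_upper_joinable_north; auto|].
  assert (HA1 : A (y1, 0)).
  { apply annulus_iff. rewrite Hy1. replace (r ^ 2 + 0 ^ 2) with (r ^ 2) by ring.
    rewrite sqrt_pow2; lra. }
  apply joinable_trans with (y0, - r); [apply annulus_lower_joinable_south; auto; lra|].
  apply joinable_trans with (y1, 0).
  - apply joinable_sym, annulus_lower_joinable_south; auto; lra.
  - apply annulus_upper_joinable_north; auto; lra.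
Qed.

End LengthSpace.
End Annulus.

Theorem mainTheorem4 (Y : Type) (d : Y -> Y -> R) (y0 : Y) (L r : R) :
  is_length_space d ->
  0 < L ->
  0 < r ->
  Rbar_lt (Finite r) (Rbar_mult (/ 2) (Diam d)) ->
  r < L ->
  path_connected d
    (fun p => YR_ball d (y0, 0) L p /\ ~ YR_ball d (y0, 0) r p).
Proof.
  intros Hls _ Hr Hdiam HrL p q Hp Hq.
  destruct (Diam_gt_far_point d y0 r (proj1 Hls) Hdiam) as [y2 Hy2].
  destruct (length_space_sphere_nonempty d y0 y2 r Hls (conj Hr Hy2)) as [y1 Hy1].
  change (joinable (YR_dist d) (annulus d (y0, 0) r L) p q).
  apply joinable_trans with (y0, r); [|apply joinable_sym];
    apply (annulus_joinable_north d (proj1 Hls) y0 r L Hls (Rlt_le _ _ Hr) y1); auto.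
Qed.
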